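(* Let $N\ge 2$ and $m\ge N$ be integers, let $c_1,\dots,c_m$ be contents with request probabilities $\rho_1,\dots,\rho_m\ge 0$, $\sum_{\ell=1}^m\rho_\ell=1$. Consider users $u_1,\dots,u_N$, where $u_\kappa$ caches exactly $c_\kappa$, and each user $u_\mu$ independently requests a single content $R_\mu$ with $\Pr(R_\mu=c_\ell)=\rho_\ell$. Let $K$ be uniform on $\{1,\dots,N\}$, independent of the requests. Then the probability $\mathcal{P}_{\textup{TX}}$ that $u_K$ operates in a transmitting mode, i.e. in one of the modes SR-HDTX, HDTX or FDTR, is \[ \mathcal{P}_{\textup{TX}} = \frac{1}{N} \sum_{\kappa=1}^{N}\left(1-\left(1-\rho_\kappa\right)^{N-1}\right). \]
   Context: For a user $u_\kappa$, let $S_\kappa$ be the event that there exists $\mu\ne\kappa$, $\mu\in\{1,\dots,N\}$, with $R_\mu=c_\kappa$. Modes of $u_\kappa$: SR-HDTX: $R_\kappa=c_\kappa$ and $S_\kappa$; FDTR: $R_\kappa=c_\mu$ for some $\mu\in\{1,\dots,N\}\setminus\{\kappa\}$, and $S_\kappa$; HDTX: $R_\kappa\notin\{c_1,\dots,c_N\}$ and $S_\kappa$. *)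

From HB Require Import structures.
From mathcomp Require Import all_boot all_order all_algebra.
Set Implicit Arguments. Unset Strict Implicit. Unset Printing Implicit Defensive.
Import Order.TTheory GRing.Theory Num.Theory.
Local Open Scope ring_scope.

(* Contents c_1..c_m are indexed 0..m-1 (type 'I_m); users u_1..u_N are indexed
   0..N-1 (type 'I_N); user kappa caches content number kappa (valid as N <= m).
   A request profile is r : {ffun 'I_N -> 'I_m}, r mu = index of R_mu. *)

Definition cached (N : nat) (k : 'I_N) : nat := nat_of_ord k.

Definition S_ev (N m : nat) (r : {ffun 'I_N -> 'I_m}) (k : 'I_N) : bool :=
  [exists mu : 'I_N, (mu != k) && (nat_of_ord (r mu) == cached k)].

Definition mode_SRHDTX (N m : nat) (r : {ffun 'I_N -> 'I_m}) (k : 'I_N) : bool :=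
  (nat_of_ord (r k) == cached k) && S_ev r k.

Definition mode_FDTR (N m : nat) (r : {ffun 'I_N -> 'I_m}) (k : 'I_N) : bool :=
  [exists mu : 'I_N, (mu != k) && (nat_of_ord (r k) == cached mu)] && S_ev r k.

Definition mode_HDTX (N m : nat) (r : {ffun 'I_N -> 'I_m}) (k : 'I_N) : bool :=
  [forall mu : 'I_N, nat_of_ord (r k) != cached mu] && S_ev r k.

Definition transmitting (N m : nat) (r : {ffun 'I_N -> 'I_m}) (k : 'I_N) : bool :=
  [|| mode_SRHDTX r k, mode_HDTX r k | mode_FDTR r k].

Definition req_prob (R : realFieldType) (N m : nat) (rho : nat -> R)
  (r : {ffun 'I_N -> 'I_m}) : R := \prod_(mu : 'I_N) rho (nat_of_ord (r mu)).

Definition P_TX (R : realFieldType) (N m : nat) (rho : nat -> R) : R :=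
  \sum_(k : 'I_N) \sum_(r : {ffun 'I_N -> 'I_m})
     (N%:R)^-1 * req_prob rho r * (transmitting r k)%:R.

(* Each of the three transmitting modes is [S_kappa] together with a condition
   on where [R_kappa] falls (on [c_kappa], on another cached content, or on no
   cached content); these conditions are exhaustive, so [u_kappa] transmits iff
   [S_kappa] holds.  By independence of the requests, the complement of
   [S_kappa] has probability [(1 - rho_kappa)^(N-1)]: each of the [N - 1] other
   users must avoid [c_kappa]. *)
From mathcomp Require Import all_boot all_order all_algebra.
Import GRing.Theory Num.Theory.
Local Open Scope ring_scope.

Lemma prodr_nat_bool (R : comPzSemiRingType) (I : finType) (b : pred I) :
  \prod_(i : I) (b i)%:R = [forall i, b i]%:R :> R.
Proof.
have [ball | /forallPn[i /negbTE bi]] := boolP [forall i, b i].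
  by rewrite big1 // => i _; rewrite (forallP ball).
by rewrite (bigD1 i) //= bi mul0r.
Qed.

Lemma transmittingE (N m : nat) (r : {ffun 'I_N -> 'I_m}) (k : 'I_N) :
  transmitting r k = S_ev r k.
Proof.
rewrite /transmitting /mode_SRHDTX /mode_HDTX /mode_FDTR.
case: (S_ev r k); rewrite ?andbF ?andbT //.
have [/existsP[mu /eqP rk_mu] | ] := boolP [exists mu : 'I_N, nat_of_ord (r k) == cached mu].
  case: (eqVneq mu k) => [mu_k | mu_k]; first by rewrite rk_mu mu_k eqxx.
  by apply/or3P; apply: Or33; apply/existsP; exists mu; rewrite mu_k rk_mu eqxx.
by rewrite negb_exists => ->; rewrite orbT.
Qed.

Section RequestProbability.

Variables (R : realFieldType) (N m : nat) (rho : nat -> R).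
Hypothesis rho1 : \sum_(l < m) rho l = 1.

Lemma sum_req_prob : \sum_(r : {ffun 'I_N -> 'I_m}) req_prob rho r = 1.
Proof.
by rewrite -(bigA_distr_bigA (fun (mu : 'I_N) (l : 'I_m) => rho l)) big1.
Qed.

Lemma sum_rho_neq (k : nat) : (k < m)%N ->
  \sum_(l < m) rho l * (l != k :> nat)%:R = 1 - rho k.
Proof.
move=> km; rewrite -[in RHS]rho1 (bigD1 (Ordinal km)) // [in RHS](bigD1 (Ordinal km)) //=.
rewrite eqxx mulr0 add0r addrC addrK.
by apply: eq_bigr => l lk; rewrite lk mulr1.
Qed.

Hypothesis leNm : (N <= m)%N.

Lemma sum_req_prob_notS (k : 'I_N) :
  \sum_(r : {ffun 'I_N -> 'I_m}) req_prob rho r * (~~ S_ev r k)%:R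
  = (1 - rho k) ^+ N.-1.
Proof.
pose w (mu : 'I_N) (l : 'I_m) := rho l * ((mu == k) || (l != k :> nat))%:R.
have notS_prod r : req_prob rho r * (~~ S_ev r k)%:R = \prod_mu w mu (r mu).
  rewrite big_split /= prodr_nat_bool /S_ev negb_exists.
  by congr (_ * (nat_of_bool _)%:R); apply: eq_forallb => mu; rewrite negb_and negbK.
rewrite (eq_bigr _ (fun r _ => notS_prod r)) -(bigA_distr_bigA w) /=.
rewrite (bigD1 k) //= [X in X * _](_ : _ = 1); last first.
  by rewrite -rho1; apply: eq_bigr => l _; rewrite /w eqxx mulr1.
rewrite mul1r (eq_bigr (fun _ => 1 - rho k)) ?prodr_const ?cardC1 ?card_ord //.
move=> mu /negbTE mu_k; rewrite -sum_rho_neq; last exact: leq_trans (ltn_ord k) leNm.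
by apply: eq_bigr => l _; rewrite /w mu_k.
Qed.

Lemma sum_req_prob_S (k : 'I_N) :
  \sum_(r : {ffun 'I_N -> 'I_m}) req_prob rho r * (S_ev r k)%:R
  = 1 - (1 - rho k) ^+ N.-1.
Proof.
have natr_negb (b : bool) : b%:R = 1 - (~~ b)%:R :> R by case: b; rewrite ?subr0 ?subrr.
under eq_bigr do rewrite natr_negb mulrBr mulr1.
by rewrite sumrB sum_req_prob sum_req_prob_notS.
Qed.

End RequestProbability.

Theorem corollary1 (R : realFieldType) (N m : nat) (rho : nat -> R)
  (hN : (2 <= N)%N) (hNm : (N <= m)%N)
  (hrho0 : forall l : nat, (l < m)%N -> 0 <= rho l)
  (hrho1 : \sum_(l < m) rho l = 1) :
  P_TX N m rho = (N%:R)^-1 * \sum_(k < N) (1 - (1 - rho k) ^+ (N.-1)).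
Proof.
rewrite /P_TX big_distrr /=; apply: eq_bigr => k _.
rewrite -(@sum_req_prob_S R N m rho hrho1 hNm) big_distrr /=; apply: eq_bigr => r _.
by rewrite transmittingE mulrA.
Qed.
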